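(* Consider a tabular discounted MDP (finite $\mathcal{S},\mathcal{A}$, discount $\gamma\in[0,1)$, rewards in $[0,1]$), a mirror map $h$ of Legendre type with $\Delta(\mathcal{A})\subseteq\operatorname{dom}h$, and the inexact policy mirror descent iterates $$\pi^{k+1}_s=\operatorname{argmin}_{p\in\Delta(\mathcal{A})}\Big\{-\eta_k\langle\widehat{Q}^k_s,p\rangle+D_h(p,\pi^k_s)\Big\}\quad\text{for all }s,$$ with $\pi^0\in\operatorname{rint}\Pi$, $\eta_k>0$, and arbitrary estimates $\widehat{Q}^k\in\mathbb{R}^{\mathcal{S}\times\mathcal{A}}$. For any $k\ge0$ and $\tau>0$, if $\|\widehat{Q}^k_s-Q^k_s\|_\infty\leq\tau$ for all $s\in\mathcal{S}$, then $$Q^{k+1}(s,a)\geq Q^k(s,a)-\frac{2\tau\gamma}{1-\gamma}\quad\text{for all }(s,a)\in\mathcal{S}\times\mathcal{A}.$$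
   Context: A policy is $\pi:\mathcal{S}\to\Delta(\mathcal{A})$, $\pi_s=\pi(\cdot|s)$; $\Pi=\Delta(\mathcal{A})^{|\mathcal{S}|}$, $\operatorname{rint}\Pi$ its relative interior. $Q^\pi(s,a)=\mathbb{E}[\sum_{t\ge0}\gamma^tr(s_t,a_t)\mid\pi,s_0=s,a_0=a]$; $Q^k=Q^{\pi^k}$ (true action values of the iterates), $Q^k_s=(Q^k(s,a))_a$, and $\widehat{Q}^k_s=(\widehat{Q}^k(s,a))_a$. Legendre type: strictly convex and essentially smooth on the relative interior of the domain; $D_h(p,q)=h(p)-h(q)-\langle\nabla h(q),p-q\rangle$. *)

From HB Require Import structures.
From mathcomp Require Import all_boot all_order all_algebra.
From mathcomp Require Import all_classical all_reals.
From mathcomp Require Import all_analysis.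
Import numFieldNormedType.Exports.
Set Implicit Arguments. Unset Strict Implicit. Unset Printing Implicit Defensive.
Import Order.TTheory GRing.Theory Num.Theory.
Local Open Scope ring_scope.
Local Open Scope classical_set_scope.

Section Defs.
Variable R : realType.

Section Vec.
Variable I : finType.

Definition vnorm (x : I -> R) : R := \big[Num.max/0]_(i : I) `|x i|.
Definition dotp (x y : I -> R) : R := \sum_(i : I) x i * y i.

Definition affhull (C : set (I -> R)) : set (I -> R) :=
  [set x | exists (n : nat) (c : 'I_n -> R) (y : 'I_n -> I -> R),
      (forall j, C (y j)) /\ \sum_(j < n) c j = 1 /\
      x = (fun i => \sum_(j < n) c j * y j i)].

Definition affdir (C : set (I -> R)) : set (I -> R) :=
  [set v | exists x y, affhull C x /\ affhull C y /\ v = (fun i => y i - x i)].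

Definition rint (C : set (I -> R)) : set (I -> R) :=
  [set x | C x /\ exists e : R, 0 < e /\
      forall y, affhull C y -> vnorm (fun i => y i - x i) < e -> C y].

Definition vclosure (C : set (I -> R)) : set (I -> R) :=
  [set x | forall e : R, 0 < e -> exists y, C y /\ vnorm (fun i => y i - x i) < e].

Definition simplex : set (I -> R) :=
  [set p | (forall i, 0 <= p i) /\ \sum_(i : I) p i = 1].

Definition edom (h : (I -> R) -> \bar R) : set (I -> R) :=
  [set x | h x \is a fin_num].

Definition proper_convex (h : (I -> R) -> \bar R) : Prop :=
  (forall x, h x != -oo%E) /\ (exists x, edom h x) /\
  forall x y (t : R), edom h x -> edom h y -> 0 <= t <= 1 ->
    edom h (fun i => t * x i + (1 - t) * y i) /\
    fine (h (fun i => t * x i + (1 - t) * y i)) <=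
      t * fine (h x) + (1 - t) * fine (h y).

Definition rel_gradient (h : (I -> R) -> \bar R) (x g : I -> R) : Prop :=
  affdir (edom h) g /\
  forall e : R, 0 < e -> exists d : R, 0 < d /\
    forall v, affdir (edom h) v -> vnorm v < d ->
      `|fine (h (fun i => x i + v i)) - fine (h x) - dotp g v| <= e * vnorm v.

(* h is of Legendre type, with gradient map g on rint dom h:
   proper convex, strictly convex on rint dom h, and essentially smooth there
   (rint dom h nonempty, h differentiable on it with gradient g, and
   |grad h(x_k)| -> +oo along sequences in rint dom h converging to a
   relative-boundary point of dom h). *)
Definition legendre (h : (I -> R) -> \bar R) (g : (I -> R) -> I -> R) : Prop :=
  proper_convex h /\
  (forall x y (t : R), rint (edom h) x -> rint (edom h) y -> x != y ->
     0 < t < 1 ->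
     fine (h (fun i => t * x i + (1 - t) * y i)) <
       t * fine (h x) + (1 - t) * fine (h y)) /\
  (exists x, rint (edom h) x) /\
  (forall x, rint (edom h) x -> rel_gradient h x (g x)) /\
  (forall (u : nat -> I -> R) (x : I -> R),
     (forall k, rint (edom h) (u k)) ->
     vclosure (edom h) x -> ~ rint (edom h) x ->
     (forall e : R, 0 < e -> exists N, forall k, (N <= k)%N ->
        vnorm (fun i => u k i - x i) < e) ->
     forall M : R, exists N, forall k, (N <= k)%N -> M < vnorm (g (u k))).

Definition bregman (h : (I -> R) -> \bar R) (g : (I -> R) -> I -> R)
  (p q : I -> R) : R :=
  fine (h p) - fine (h q) - dotp (g q) (fun i => p i - q i).
End Vec.

Section MDP.
Variables (S A : finType).
(* transition kernel P(s'|s,a) = P s a s', reward r, discount gamma *)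
Variables (P : S -> A -> S -> R) (r : S -> A -> R) (gamma : R).

Definition is_mdp : Prop :=
  (forall s a, simplex (P s a)) /\ (forall s a, 0 <= r s a <= 1) /\
  0 <= gamma < 1.

Definition is_policy (pi : S -> A -> R) : Prop := forall s, simplex (pi s).

Definition Pi_set : set (S * A -> R) :=
  [set x | forall s, simplex (fun a => x (s, a))].
Definition uncurry_pol (pi : S -> A -> R) : S * A -> R := fun sa => pi sa.1 sa.2.

(* law of (s_t, a_t) given s_0 = s, a_0 = a, following pi *)
Fixpoint state_action_law (pi : S -> A -> R) (s : S) (a : A) (t : nat)
  : S -> A -> R :=
  match t with
  | 0 => fun s' a' => ((s' == s) && (a' == a))%:R
  | t'.+1 => fun s' a' =>
      \sum_(s0 : S) \sum_(a0 : A)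
        state_action_law pi s a t' s0 a0 * P s0 a0 s' * pi s' a'
  end.

Definition Qfun (pi : S -> A -> R) (s : S) (a : A) : R :=
  limn (fun n : nat => (\sum_(0 <= t < n)
     gamma ^+ t * \sum_(s' : S) \sum_(a' : A)
        state_action_law pi s a t s' a' * r s' a' : R)).
End MDP.
End Defs.

From HB Require Import structures.
From mathcomp Require Import all_boot all_order all_algebra.
From mathcomp Require Import all_classical all_reals.
From mathcomp Require Import all_analysis.
From mathcomp Require Import ring lra.
Import numFieldNormedType.Exports.
Set Implicit Arguments. Unset Strict Implicit. Unset Printing Implicit Defensive.
Import Order.TTheory GRing.Theory Num.Theory.
Local Open Scope ring_scope.
Local Open Scope classical_set_scope.

(** The improvement step of mirror descent holds because every iterate stays in
    the relative interior of [dom h], where [h] is differentiable.  If a minimiser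
    [x] of [h - <c, .>] over the simplex lay on the relative boundary, then along
    the segment from an interior point [y] to [x] the first-order optimality of
    [x] would keep the gradients of [h] bounded, contradicting essential
    smoothness.  Hence [D_h(pi^(k+1)_s, pi^k_s) >= 0], and comparing the update
    with the choice [p = pi^k_s] gives [<Qhat^k_s, pi^(k+1)_s - pi^k_s> >= 0], so
    the true advantage [<Q^k_s, pi^(k+1)_s - pi^k_s>] is at least [-2 tau].
    Finally [Q^k] and [Q^(k+1)] solve their Bellman equations, and at a pair
    [(s, a)] minimising [Q^(k+1) - Q^k] the minimum [m] satisfies
    [m >= gamma (m - 2 tau)], i.e. [m >= - 2 tau gamma / (1 - gamma)]. *)

Section Vectors.
Variables (R : realType) (I : finType).
Implicit Types (x y u : I -> R).

Lemma vnorm_ge0 x : 0 <= vnorm x.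
Proof. exact: bigmax_ge_id. Qed.

Lemma ler_vnorm x i : `|x i| <= vnorm x.
Proof. exact: (le_bigmax _ (fun i => `|x i|)). Qed.

Lemma vnorm_le x (M : R) : 0 <= M -> (forall i, `|x i| <= M) -> vnorm x <= M.
Proof. by move=> M0 xM; apply: bigmax_le. Qed.

Lemma eq_vnorm x y : x =1 y -> vnorm x = vnorm y.
Proof. by move=> xy; apply: eq_bigr => i _; rewrite xy. Qed.

Lemma vnormZ_le (c : R) x : vnorm (fun i => c * x i) <= `|c| * vnorm x.
Proof.
apply: vnorm_le => [|i]; first by rewrite mulr_ge0 ?vnorm_ge0.
by rewrite normrM ler_wpM2l ?ler_vnorm.
Qed.

Lemma eq_dotpr x y u : y =1 u -> dotp x y = dotp x u.
Proof. by move=> yu; apply: eq_bigr => i _; rewrite yu. Qed.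

Lemma dotpDr x y u : dotp x (fun i => y i + u i) = dotp x y + dotp x u.
Proof. by rewrite /dotp -big_split; apply: eq_bigr => i _; rewrite mulrDr. Qed.

Lemma dotpBr x y u : dotp x (fun i => y i - u i) = dotp x y - dotp x u.
Proof. by rewrite /dotp -sumrB; apply: eq_bigr => i _; rewrite mulrBr. Qed.

Lemma dotpZr (c : R) x y : dotp x (fun i => c * y i) = c * dotp x y.
Proof. by rewrite /dotp mulr_sumr; apply: eq_bigr => i _; rewrite mulrCA. Qed.

Lemma dotpC x y : dotp x y = dotp y x.
Proof. by apply: eq_bigr => i _; rewrite mulrC. Qed.

Lemma dotp_subrr x y : dotp x (fun i => y i - y i) = 0.
Proof. by rewrite dotpBr subrr. Qed.

Lemma dotp_sumr (T : Type) (ts : seq T) (F : T -> I -> R) x :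
  dotp x (fun i => \sum_(t <- ts) F t i) = \sum_(t <- ts) dotp x (F t).
Proof. by rewrite /dotp; under eq_bigr do rewrite mulr_sumr; exact: exchange_big. Qed.

Lemma cvgn_dotpr x (y : nat -> I -> R) (l : I -> R) :
  (forall i, y n i @[n --> \oo] --> l i) -> dotp x (y n) @[n --> \oo] --> dotp x l.
Proof.
move=> yl; apply: cvg_big => [|i _]; first exact: add_continuous.
exact: cvgMr.
Qed.

Lemma normr_dotp_le x y : `|dotp x y| <= (\sum_i `|x i|) * vnorm y.
Proof.
rewrite /dotp mulr_suml; apply: le_trans (ler_norm_sum _ _ _) _.
by apply: ler_sum => i _; rewrite normrM ler_wpM2l ?ler_vnorm.
Qed.

Lemma sqr_vnorm_le_dotp x : vnorm x ^+ 2 <= dotp x x.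
Proof.
have [j _|noI] := pickP (fun _ : I => true); last first.
  by rewrite /vnorm /dotp !big_pred0 // expr0n.
rewrite /vnorm; have [i0 _ ->] :=
  @eq_bigmax _ R I 0 j xpredT (fun i => `|x i|) isT (fun i _ => normr_ge0 (x i)).
rewrite /dotp (bigD1 i0) //= ler_wpDr ?real_normK ?num_real -?expr2 //.
by apply: sumr_ge0 => i _; rewrite -expr2 sqr_ge0.
Qed.

Lemma dotp_normalize_ge x (d : R) :
  0 <= d -> d * vnorm x <= dotp x (fun i => d / vnorm x * x i).
Proof.
move=> d0; rewrite dotpZr.
have [->|x0] := eqVneq (vnorm x) 0; first by rewrite invr0 !(mulr0, mul0r).
have xpos : 0 < vnorm x by rewrite lt0r x0 vnorm_ge0.
by rewrite mulrAC ler_pdivlMr // -mulrA ler_wpM2l // -expr2 sqr_vnorm_le_dotp.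
Qed.

Lemma segment_cvg_endpoint x y (e : R) : 0 < e -> exists N, forall k, (N <= k)%N ->
  vnorm (fun i => (k.+1%:R^-1 * y i + (1 - k.+1%:R^-1) * x i) - x i) < e.
Proof.
move=> e0; set W := vnorm (fun i => y i - x i).
exists (Num.truncn (W / e)) => k kN.
rewrite (@eq_vnorm _ (fun i => k.+1%:R^-1 * (y i - x i))) => [|i]; last by ring.
apply: le_lt_trans (vnormZ_le _ _) _.
rewrite ger0_norm ?invr_ge0 // mulrC ltr_pdivrMr ?ltr0Sn // -/W.
have := truncnS_gt (W / e); rewrite ltr_pdivrMr // => We.
have : (Num.truncn (W / e)).+1%:R <= k.+1%:R :> R by rewrite ler_nat.
clearbody W; nra.
Qed.

End Vectors.

Section RelativeInterior.
Variables (R : realType) (I : finType) (C : set (I -> R)).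
Implicit Types (x y u v w : I -> R).

Lemma subset_affhull : C `<=` affhull C.
Proof.
move=> x Cx; exists 1%N, (fun _ => 1), (fun _ => x); split => //.
by rewrite big_ord1; split => //; apply/funext => i; rewrite big_ord1 mul1r.
Qed.

Lemma affhull_comb x y (t : R) :
  affhull C x -> affhull C y -> affhull C (fun i => t * x i + (1 - t) * y i).
Proof.
move=> [m [a [xs [Cxs [a1 ->]]]]] [n [b [ys [Cys [b1 ->]]]]].
pose c (j : 'I_(m + n)) :=
  match fintype.split j with inl j1 => t * a j1 | inr j2 => (1 - t) * b j2 end.
pose zs (j : 'I_(m + n)) :=
  match fintype.split j with inl j1 => xs j1 | inr j2 => ys j2 end.
exists (m + n)%N, c, zs; split; first by move=> j; rewrite /zs; case: fintype.split.
have splitl (j : 'I_m) : fintype.split (lshift n j) = inl j := unsplitK (inl j).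
have splitr (j : 'I_n) : fintype.split (rshift m j) = inr j := unsplitK (inr j).
split.
  rewrite big_split_ord (eq_bigr (fun j => t * a j)) => [|j _]; last by rewrite /c splitl.
  rewrite (eq_bigr (fun j => (1 - t) * b j)) => [|j _]; last by rewrite /c splitr.
  by rewrite /= -!mulr_sumr a1 b1 !mulr1 addrC subrK.
apply/funext => i; rewrite big_split_ord /= !mulr_sumr; congr (_ + _).
  by apply: eq_bigr => j _; rewrite /c /zs splitl mulrA.
by apply: eq_bigr => j _; rewrite /c /zs splitr mulrA.
Qed.

Lemma subset_vclosure : C `<=` vclosure C.
Proof.
move=> x Cx e e0; exists x; split => //; apply: le_lt_trans e0.
by apply: vnorm_le => // i; rewrite subrr normr0.
Qed.

Lemma affdirB x y : affhull C x -> affhull C y -> affdir C (fun i => y i - x i).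
Proof. by move=> Ax Ay; exists x, y. Qed.

Lemma affdirZ (c : R) v : affdir C v -> affdir C (fun i => c * v i).
Proof.
move=> [x [y [Ax [Ay ->]]]].
exists x, (fun i => c * y i + (1 - c) * x i); split => //; split.
  exact: affhull_comb.
by apply/funext => i; ring.
Qed.

Lemma affhullD y v : affhull C y -> affdir C v -> affhull C (fun i => y i + v i).
Proof.
move=> Ay [a [b [Aa [Ab ->]]]].
have := affhull_comb (2 : R) (affhull_comb (2^-1 : R) Ay Ab) Aa.
by congr affhull; apply/funext => i; field.
Qed.

Lemma rint_convex_comb x y (t : R) :
  (forall u w (s : R), C u -> C w -> 0 <= s <= 1 -> C (fun i => s * u i + (1 - s) * w i)) ->
  rint C y -> C x -> 0 < t <= 1 -> rint C (fun i => t * y i + (1 - t) * x i).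
Proof.
move=> convC [Cy [e [e0 ballC]]] Cx /andP[t0 t1].
have t01 : 0 <= t <= 1 by rewrite ltW.
split; first exact: convC.
exists (t * e); split => [|w Aw wz]; first exact: mulr_gt0.
pose y' i := t^-1 * w i + (1 - t^-1) * x i.
have -> : w = (fun i => t * y' i + (1 - t) * x i).
  by apply/funext => i; rewrite /y'; field; rewrite gt_eqF.
apply: convC => //; apply: ballC.
  by apply: affhull_comb => //; exact: subset_affhull.
rewrite (@eq_vnorm _ _ _ (fun i => t^-1 * (w i - (t * y i + (1 - t) * x i)))).
  apply: le_lt_trans (vnormZ_le _ _) _.
  by rewrite ger0_norm ?invr_ge0 ?ltW // ltr_pdivrMl // mulrC.
by move=> i; rewrite /y'; field; rewrite gt_eqF.
Qed.

End RelativeInterior.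

Section Simplex.
Variables (R : realType) (I : finType).
Implicit Types (p q x y : I -> R).

Lemma simplex_comb p q (t : R) : 0 <= t <= 1 -> simplex p -> simplex q ->
  simplex (fun i => t * p i + (1 - t) * q i).
Proof.
move=> /andP[t0 t1] [p0 p1] [q0 q1]; split.
  by move=> i; rewrite addr_ge0 // mulr_ge0 // subr_ge0.
by rewrite big_split /= -!mulr_sumr p1 q1 !mulr1 addrC subrK.
Qed.

Lemma simplex_dotp_ge p x (m : R) : simplex p -> (forall i, m <= x i) -> m <= dotp p x.
Proof.
move=> [p0 p1] mx; rewrite -[m]mul1r -p1 mulr_suml.
by apply: ler_sum => i _; rewrite ler_wpM2l.
Qed.

Lemma simplex_dotp_le p x (M : R) : simplex p -> (forall i, x i <= M) -> dotp p x <= M.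
Proof.
move=> [p0 p1] xM; rewrite -[M]mul1r -p1 mulr_suml.
by apply: ler_sum => i _; rewrite ler_wpM2l.
Qed.

Lemma dotp_simplexB_ge p q x (tau : R) : simplex p -> simplex q ->
  (forall i, `|x i| <= tau) -> - (2 * tau) <= dotp x (fun i => p i - q i).
Proof.
move=> [p0 p1] [q0 q1] xtau.
have -> : - (2 * tau) = \sum_i - ((p i + q i) * tau).
  by rewrite sumrN -mulr_suml big_split /= p1 q1.
apply: ler_sum => i _; move: (xtau i) (p0 i) (q0 i); rewrite ler_norml; nra.
Qed.

Lemma dotp_simplexB_approx_ge p q x y (tau : R) : simplex p -> simplex q ->
  (forall i, `|y i - x i| <= tau) -> dotp y q <= dotp y p ->
  - (2 * tau) <= dotp x (fun i => p i - q i).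
Proof.
move=> Sp Sq xy improve.
have xy' i : `|x i - y i| <= tau by rewrite distrC.
have -> : dotp x (fun i => p i - q i) =
    dotp (fun i => x i - y i) (fun i => p i - q i) + (dotp y p - dotp y q).
  by rewrite /dotp -sumrB -big_split; apply: eq_bigr => i _ /=; ring.
by have := dotp_simplexB_ge Sp Sq xy'; lra.
Qed.

End Simplex.

Section Legendre.
Variables (R : realType) (I : finType).
Variables (h : (I -> R) -> \bar R) (g : (I -> R) -> I -> R).
Hypothesis hL : legendre h g.
Local Notation C := (edom h).
Implicit Types (c p q x y z w : I -> R).

Lemma legendre_dom_convex x y (t : R) :
  C x -> C y -> 0 <= t <= 1 -> C (fun i => t * x i + (1 - t) * y i).
Proof. by move=> Cx Cy t01; case: (hL.1.2.2 x y t Cx Cy t01). Qed.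

Lemma legendre_gradient z : rint C z -> rel_gradient h z (g z).
Proof. by case: hL => _ [_ [_ [grad _]]]; apply: grad. Qed.

Lemma legendre_subgradient z w :
  rint C z -> C w -> fine (h z) + dotp (g z) (fun i => w i - z i) <= fine (h w).
Proof.
move=> Rz Cw; have Cz := Rz.1.
set v := fun i => w i - z i; set N := vnorm v; have N0 : 0 <= N := vnorm_ge0 v.
have [_ diffz] := legendre_gradient Rz.
have vdir : affdir C v by apply: affdirB; apply: subset_affhull.
(* Convexity bounds the difference quotients of [h] along [v] by [h w - h z];
   differentiability makes them [<g z, v>] up to [e * |v|]. *)
suff slope e : 0 < e -> dotp (g z) v <= fine (h w) - fine (h z) + e * N.
  apply/ler_addgt0Pr => eps eps0.
  have := slope (eps / (N + 1)) (divr_gt0 eps0 (ltr_wpDl N0 ltr01)).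
  have : eps / (N + 1) * N <= eps by rewrite mulrAC ler_pdivrMr ?ltr_wpDl //; nra.
  lra.
move=> e0; have [d [d0 diffz_e]] := diffz e e0.
pose s := d / (N + d + 1).
have s0 : 0 < s by rewrite divr_gt0 //; lra.
have s1 : s <= 1 by rewrite ler_pdivrMr ?mul1r; lra.
have sN : s * N < d by rewrite mulrAC ltr_pdivrMr; nra.
have sv : vnorm (fun i => s * v i) <= s * N.
  by apply: le_trans (vnormZ_le _ _) _; rewrite ger0_norm // ltW.
have := diffz_e _ (affdirZ s vdir) (le_lt_trans sv sN).
have -> : (fun i => z i + s * v i) = (fun i => s * w i + (1 - s) * z i).
  by apply/funext => i; rewrite /v; ring.
have [_ convh] := hL.1.2.2 w z s Cw Cz (introT andP (conj (ltW s0) s1)).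
rewrite dotpZr ler_norml => /andP[diff_lb _].
have : s * (e * N) >= e * vnorm (fun i => s * v i) by rewrite mulrCA ler_wpM2l // ltW.
move=> esv; rewrite -(ler_pM2l s0); lra.
Qed.

Lemma legendre_grad_bound y : rint C y -> exists2 del : R, 0 < del &
  forall z, rint C z -> del * vnorm (g z) <=
    dotp (g z) (fun i => z i - y i) + (\sum_i `|g y i|) * vnorm (fun i => z i - y i)
    + (\sum_i `|g y i| + 1) * del.
Proof.
move=> Ry; have [Cy [e [e0 ballC]]] := Ry.
have [_ /(_ 1 ltr01) [d [d0 diffy]]] := legendre_gradient Ry.
have md0 : 0 < Num.min e d by rewrite lt_min e0 d0.
exists (Num.min e d / 2) => [|z Rz]; first by rewrite divr_gt0.
set del := Num.min e d / 2; set G := g z; set S1 := \sum_i `|g y i|.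
have del0 : 0 < del by rewrite divr_gt0.
have [dele deld] : del < e /\ del < d.
  by have := ge_min e e d; have := ge_min d e d; rewrite !lexx orbT /del; lra.
(* Test the subgradient inequality at [z] against [y + v] with [v] of length
   [del] along [g z]; the ball around [y] keeps [y + v] in [dom h]. *)
pose v i := del / vnorm G * G i.
have vdir : affdir C v by apply: affdirZ; exact: (legendre_gradient Rz).1.
have vdel : vnorm v <= del.
  apply: le_trans (vnormZ_le _ _) _.
  rewrite ger0_norm; last by rewrite divr_ge0 ?vnorm_ge0 ?(ltW del0).
  have [->|G0] := eqVneq (vnorm G) 0; first by rewrite mulr0 (ltW del0).
  by rewrite divfK.
have Cw : C (fun i => y i + v i).
  apply: ballC; first exact: affhullD (subset_affhull Cy) vdir.
  rewrite (_ : (fun i => _) = v); first exact: le_lt_trans vdel dele.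
  by apply/funext => i /=; ring.
have sub_z := legendre_subgradient Rz Cw.
have sub_y := legendre_subgradient Ry Rz.1.
have := diffy v vdir (le_lt_trans vdel deld).
rewrite mul1r ler_norml => /andP[_ diff_ub].
have := normr_dotp_le (g y) v; rewrite ler_norml => /andP[_ gyv].
have := normr_dotp_le (g y) (fun i => z i - y i); rewrite ler_norml => /andP[gyz _].
have : S1 * vnorm v <= S1 * del by rewrite ler_wpM2l ?sumr_ge0.
have : dotp G (fun i => y i + v i - z i) = dotp G v - dotp G (fun i => z i - y i).
  by rewrite -dotpBr; apply: eq_dotpr => i; ring.
have := dotp_normalize_ge G (ltW del0); rewrite -/v.
rewrite -/G -/S1 in sub_z gyv gyz *; lra.
Qed.

Lemma legendre_argmin_rint c x y :
  @simplex R I `<=` C -> simplex y -> rint C y -> simplex x ->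
  (forall p, simplex p -> fine (h x) - dotp c x <= fine (h p) - dotp c p) -> rint C x.
Proof.
move=> subC Sy Ry Sx xmin; apply: contrapT => notRx; have Cx := subC x Sx.
pose z (t : R) i := t * y i + (1 - t) * x i.
have Rz t : 0 < t <= 1 -> rint C (z t).
  by apply: rint_convex_comb => //; exact: legendre_dom_convex.
have [del del0 grad_bound] := legendre_grad_bound Ry.
set cyx := dotp c (fun i => y i - x i); set S1 := \sum_i `|g y i|.
have S10 : 0 <= S1 by apply: sumr_ge0.
set V := vnorm (fun i => x i - y i).
have slope t : 0 < t <= 1 -> cyx <= dotp (g (z t)) (fun i => y i - x i).
  move=> /[dup] t01 /andP[t0 t1].
  have := legendre_subgradient (Rz t t01) Cx.
  have := xmin (z t) (simplex_comb (t := t) (introT andP (conj (ltW t0) t1)) Sy Sx).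
  have -> : dotp (g (z t)) (fun i => x i - z t i) =
      - t * dotp (g (z t)) (fun i => y i - x i).
    by rewrite -dotpZr; apply: eq_dotpr => i; rewrite /z; ring.
  have -> : dotp c (z t) = dotp c x + t * cyx.
    by rewrite -dotpZr -dotpDr; apply: eq_dotpr => i; rewrite /z; ring.
  by move=> ? ?; rewrite -(ler_pM2l t0); lra.
have bounded t : 0 < t <= 1 -> del * vnorm (g (z t)) <= `|cyx| + S1 * V + (S1 + 1) * del.
  move=> /[dup] t01 /andP[t0 t1]; apply: le_trans (grad_bound _ (Rz t t01)) _.
  have -> : dotp (g (z t)) (fun i => z t i - y i) =
      - (1 - t) * dotp (g (z t)) (fun i => y i - x i).
    by rewrite -dotpZr; apply: eq_dotpr => i; rewrite /z; ring.
  have zyV : vnorm (fun i => z t i - y i) <= V.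
    rewrite (@eq_vnorm _ _ _ (fun i => (1 - t) * (x i - y i))) => [|i]; last first.
      by rewrite /z; ring.
    apply: le_trans (vnormZ_le _ _) _; rewrite ger0_norm ?subr_ge0 //.
    by rewrite ler_piMl ?vnorm_ge0 // lerBlDr lerDl ltW.
  have := ler_wpM2l S10 zyV; have t1' : 0 <= 1 - t by rewrite subr_ge0.
  have := ler_wpM2l t1' (slope t t01).
  have := ler_norm (- cyx); rewrite normrN -/S1; have := normr_ge0 cyx; nra.
have tk (k : nat) : 0 < (k.+1%:R^-1 : R) <= 1.
  by rewrite invr_gt0 ltr0Sn /= invf_le1 ?ltr0Sn // ler1n.
have [N blowN] := hL.2.2.2.2 _ x (fun k => Rz _ (tk k)) (subset_vclosure Cx) notRx
  (fun e => @segment_cvg_endpoint _ _ x y e) ((`|cyx| + S1 * V + (S1 + 1) * del) / del).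
have := blowN N (leqnn N); rewrite ltr_pdivrMr //.
have := bounded _ (tk N); lra.
Qed.

Lemma bregman_id q : bregman h g q q = 0.
Proof. by rewrite /bregman dotp_subrr !subrr. Qed.

Lemma bregman_ge0 p q : rint C q -> C p -> 0 <= bregman h g p q.
Proof. by move=> Rq Cp; have := legendre_subgradient Rq Cp; rewrite /bregman; lra. Qed.

End Legendre.

Section PairSums.
Variables (R : ringType) (I J : finType).

Lemma exchange_pair_big (F : I -> J -> I -> J -> R) :
  \sum_i0 \sum_j0 \sum_i1 \sum_j1 F i0 j0 i1 j1 =
  \sum_i1 \sum_j1 \sum_i0 \sum_j0 F i0 j0 i1 j1.
Proof.
rewrite pair_bigA [RHS]pair_bigA; under eq_bigr do rewrite pair_bigA.
by rewrite exchange_big; apply: eq_bigr => q _; rewrite pair_bigA.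
Qed.

Lemma sum_indicator (F : I -> J -> R) i j :
  \sum_i0 \sum_j0 ((i0 == i) && (j0 == j))%:R * F i0 j0 = F i j.
Proof.
rewrite (bigD1 i) //= [X in _ + X]big1 ?addr0 => [|i0 /negbTE i0i]; last first.
  by rewrite big1 // => j0 _; rewrite i0i mul0r.
rewrite (bigD1 j) //= !eqxx mul1r [X in _ + X]big1 ?addr0 // => j0 /negbTE j0j.
by rewrite j0j andbF mul0r.
Qed.

End PairSums.

Section Bellman.
Variables (R : realType) (S A : finType).
Variables (P : S -> A -> S -> R) (r : S -> A -> R) (gamma : R).

Definition bellman_op (pi Q : S -> A -> R) (s : S) (a : A) : R :=
  r s a + gamma * dotp (P s a) (fun s1 => dotp (pi s1) (Q s1)).

Section FixedPolicy.
Variable pi : S -> A -> R.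
Local Notation law := (state_action_law P pi).

Lemma state_action_lawS s a t s2 a2 : law s a t.+1 s2 a2 =
  \sum_s0 \sum_a0 law s a t s0 a0 * P s0 a0 s2 * pi s2 a2.
Proof. by []. Qed.

Lemma state_action_lawS_first s a t s2 a2 : law s a t.+1 s2 a2 =
  \sum_s1 \sum_a1 P s a s1 * pi s1 a1 * law s1 a1 t s2 a2.
Proof.
elim: t s2 a2 => [|t IH] s2 a2.
  rewrite /=; under eq_bigr do under eq_bigr do rewrite -mulrA.
  rewrite sum_indicator -[LHS](sum_indicator (fun s1 a1 => P s a s1 * pi s1 a1) s2 a2).
  apply: eq_bigr => s1 _; apply: eq_bigr => a1 _.
  by rewrite mulrC (eq_sym s1) (eq_sym a1).
rewrite state_action_lawS.
transitivity (\sum_s0 \sum_a0 \sum_s1 \sum_a1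
  P s a s1 * pi s1 a1 * (law s1 a1 t s0 a0 * P s0 a0 s2 * pi s2 a2)).
  apply: eq_bigr => s0 _; apply: eq_bigr => a0 _.
  rewrite IH !mulr_suml; apply: eq_bigr => s1 _; rewrite !mulr_suml.
  by apply: eq_bigr => a1 _; rewrite !mulrA.
rewrite exchange_pair_big; apply: eq_bigr => s1 _; apply: eq_bigr => a1 _.
by rewrite state_action_lawS mulr_sumr; apply: eq_bigr => s0 _; rewrite mulr_sumr.
Qed.

Definition expected_reward t s a : R := \sum_s' \sum_a' law s a t s' a' * r s' a'.

Definition Q_partial n s a : R := \sum_(0 <= t < n) gamma ^+ t * expected_reward t s a.

Lemma expected_reward0 s a : expected_reward 0 s a = r s a.
Proof. exact: sum_indicator. Qed.

Lemma expected_rewardS t s a :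
  expected_reward t.+1 s a = dotp (P s a) (fun s1 => dotp (pi s1) (expected_reward t s1)).
Proof.
transitivity (\sum_s' \sum_a' \sum_s1 \sum_a1
    P s a s1 * pi s1 a1 * (law s1 a1 t s' a' * r s' a')).
  apply: eq_bigr => s' _; apply: eq_bigr => a' _.
  rewrite state_action_lawS_first mulr_suml; apply: eq_bigr => s1 _.
  by rewrite mulr_suml; apply: eq_bigr => a1 _; rewrite mulrA.
rewrite exchange_pair_big; apply: eq_bigr => s1 _; rewrite mulr_sumr.
apply: eq_bigr => a1 _; rewrite mulrA !mulr_sumr; apply: eq_bigr => s' _.
by rewrite mulr_sumr.
Qed.

Lemma Q_partialS n s a : Q_partial n.+1 s a = bellman_op pi (Q_partial n) s a.
Proof.
rewrite /Q_partial big_nat_recl // expr0 mul1r expected_reward0 /bellman_op.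
congr (_ + _); under eq_dotpr => s1 do rewrite dotp_sumr.
rewrite dotp_sumr mulr_sumr; apply: eq_bigr => t _.
rewrite expected_rewardS exprS -mulrA -dotpZr; congr (_ * _).
by apply: eq_dotpr => s1; rewrite dotpZr.
Qed.

Hypotheses (mdp : is_mdp P r gamma) (pol : is_policy pi).

Lemma state_action_law_ge0 s a t s' a' : 0 <= law s a t s' a'.
Proof.
have [PS _] := mdp.
elim: t s' a' => [|t IH] s' a'; first by rewrite ler0n.
rewrite state_action_lawS; do 2!(apply: sumr_ge0 => ? _).
by rewrite !mulr_ge0 ?(PS _ _).1 ?(pol _).1.
Qed.

Lemma expected_reward_ge0 t s a : 0 <= expected_reward t s a.
Proof.
have [_ [r01 _]] := mdp; do 2!(apply: sumr_ge0 => ? _).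
by rewrite mulr_ge0 ?state_action_law_ge0 // (andP (r01 _ _)).1.
Qed.

Lemma Q_partial_bounds n s a : 0 <= Q_partial n s a <= (1 - gamma)^-1.
Proof.
have [PS [r01 /andP[g0 g1]]] := mdp.
have B0 : 0 <= (1 - gamma)^-1 by rewrite invr_ge0 subr_ge0 ltW.
elim: n s a => [|n IH] s a; first by rewrite /Q_partial big_geq // lexx B0.
have IH0 s1 a1 := (andP (IH s1 a1)).1; have IH1 s1 a1 := (andP (IH s1 a1)).2.
rewrite Q_partialS /bellman_op; set V := dotp (P s a) _.
have V0 : 0 <= V.
  by apply: simplex_dotp_ge (PS s a) _ => s1; apply: simplex_dotp_ge (pol s1) _.
have V1 : V <= (1 - gamma)^-1.
  by apply: simplex_dotp_le (PS s a) _ => s1; apply: simplex_dotp_le (pol s1) _.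
have BE : 1 + gamma * (1 - gamma)^-1 = (1 - gamma)^-1.
  by field; rewrite subr_eq0 gt_eqF.
have := r01 s a; nra.
Qed.

Lemma QfunE s a : Qfun P r gamma pi s a = limn (fun n => Q_partial n s a).
Proof. by []. Qed.

Lemma Q_partial_cvg s a : cvgn (fun n => Q_partial n s a).
Proof.
have [_ [_ /andP[g0 _]]] := mdp.
apply: nondecreasing_is_cvgn.
  apply/nondecreasing_seqP => n; rewrite /Q_partial big_nat_recr //=.
  by rewrite lerDl mulr_ge0 ?exprn_ge0 ?expected_reward_ge0.
exists (1 - gamma)^-1 => _ [n _ <-].
by case/andP: (Q_partial_bounds n s a).
Qed.

Lemma Qfun_bellman s a : Qfun P r gamma pi s a = bellman_op pi (Qfun P r gamma pi) s a.
Proof.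
rewrite QfunE; apply: cvg_lim => //; rewrite -cvg_shiftS /=.
under eq_fun do rewrite Q_partialS.
apply: cvgD; first exact: cvg_cst.
apply: cvgMr; apply: cvgn_dotpr => s1; apply: cvgn_dotpr => a1.
exact: Q_partial_cvg.
Qed.

End FixedPolicy.

Lemma bellman_comparison pi1 pi2 Q1 Q2 (eps : R) :
  (forall s a, simplex (P s a)) -> is_policy pi2 -> 0 <= gamma < 1 ->
  (forall s a, Q1 s a = bellman_op pi1 Q1 s a) ->
  (forall s a, Q2 s a = bellman_op pi2 Q2 s a) ->
  (forall s, - eps <= dotp (Q1 s) (fun a => pi2 s a - pi1 s a)) ->
  forall s a, Q1 s a - eps * gamma / (1 - gamma) <= Q2 s a.
Proof.
move=> PS pol2 /andP[g0 g1] fix1 fix2 adv s a.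
pose d (sa : S * A) := Q2 sa.1 sa.2 - Q1 sa.1 sa.2.
have [[s0 a0] _ dmin] := @arg_minP _ R (S * A)%type (s, a) xpredT d isT.
set m := d (s0, a0) in dmin.
have next_ge s1 : m - eps <= dotp (pi2 s1) (Q2 s1) - dotp (pi1 s1) (Q1 s1).
  have -> : dotp (pi2 s1) (Q2 s1) - dotp (pi1 s1) (Q1 s1) =
      dotp (pi2 s1) (fun a1 => d (s1, a1)) + dotp (Q1 s1) (fun a1 => pi2 s1 a1 - pi1 s1 a1).
    by rewrite /dotp -big_split -sumrB; apply: eq_bigr => a1 _; rewrite /d /=; ring.
  have := simplex_dotp_ge (pol2 s1) (fun a1 => dmin (s1, a1) isT); have := adv s1; lra.
have m_step : gamma * (m - eps) <= m.
  have m_def : m = gamma *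
      dotp (P s0 a0) (fun s1 => dotp (pi2 s1) (Q2 s1) - dotp (pi1 s1) (Q1 s1)).
    by rewrite /m /d /= (fix1 s0 a0) (fix2 s0 a0) /bellman_op dotpBr; ring.
  rewrite [X in _ <= X]m_def; apply: ler_wpM2l => //.
  exact: simplex_dotp_ge (PS s0 a0) next_ge.
have m_lb : - (eps * gamma / (1 - gamma)) <= m.
  by rewrite -mulNr ler_pdivrMr ?subr_gt0 //; lra.
by have := dmin (s, a) isT; rewrite /d /=; lra.
Qed.

End Bellman.

Section MirrorDescentStep.
Variables (R : realType) (I : finType).
Variables (h : (I -> R) -> \bar R) (g : (I -> R) -> I -> R).
Hypotheses (hL : legendre h g) (subC : @simplex R I `<=` edom h).
Implicit Types (Qh q p : I -> R).

Definition pmd_update (eta : R) Qh q p' : Prop :=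
  simplex p' /\ forall p, simplex p ->
    - eta * dotp Qh p' + bregman h g p' q <= - eta * dotp Qh p + bregman h g p q.

Lemma pmd_objectiveE (eta : R) Qh q p :
  - eta * dotp Qh p + bregman h g p q =
  fine (h p) - dotp (fun i => eta * Qh i + g q i) p + (dotp (g q) q - fine (h q)).
Proof.
rewrite /bregman dotpBr (dotpC (fun i => _ + _)) dotpDr dotpZr (dotpC p Qh) (dotpC p).
ring.
Qed.

Lemma pmd_update_rint (eta : R) Qh q p' :
  pmd_update eta Qh q p' -> simplex q -> rint (edom h) q -> rint (edom h) p'.
Proof.
move=> [Sp' opt] Sq Rq.
apply: (@legendre_argmin_rint _ _ _ _ hL (fun i => eta * Qh i + g q i)) subC Sq Rq Sp' _.
move=> p Sp.
by have := opt p Sp; rewrite !pmd_objectiveE; lra.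
Qed.

Lemma pmd_update_improves (eta : R) Qh q p' :
  pmd_update eta Qh q p' -> 0 < eta -> simplex q -> rint (edom h) q -> dotp Qh q <= dotp Qh p'.
Proof.
move=> [Sp' opt] eta0 Sq Rq; have := opt q Sq; rewrite bregman_id.
have := bregman_ge0 hL Rq (subC Sp') => D0 opt_q; rewrite -(ler_pM2l eta0); lra.
Qed.

End MirrorDescentStep.
Theorem lemma5 (R : realType) (S A : finType)
  (P : S -> A -> S -> R) (r : S -> A -> R) (gamma : R)
  (h : (A -> R) -> \bar R) (g : (A -> R) -> A -> R)
  (pi : nat -> S -> A -> R) (eta : nat -> R) (Qhat : nat -> S -> A -> R)
  (k : nat) (tau : R) :
  is_mdp P r gamma ->
  legendre h g ->
  @simplex R A `<=` edom h ->
  rint (@Pi_set R S A) (uncurry_pol (pi 0%N)) ->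
  (forall s, rint (edom h) (pi 0%N s)) ->
  (forall n, 0 < eta n) ->
  (forall n s, @simplex R A (pi n.+1 s) /\
     forall p, @simplex R A p ->
       - eta n * dotp (Qhat n s) (pi n.+1 s) + bregman h g (pi n.+1 s) (pi n s)
       <= - eta n * dotp (Qhat n s) p + bregman h g p (pi n s)) ->
  0 < tau ->
  (forall s a, `|Qhat k s a - Qfun P r gamma (pi k) s a| <= tau) ->
  forall s a,
    Qfun P r gamma (pi k) s a - 2 * tau * gamma / (1 - gamma)
      <= Qfun P r gamma (pi k.+1) s a.
Proof.
move=> mdp hL subC [pi0_pol _] pi0_rint eta0 upd _ Qhat_err.
have pol n s : simplex (pi n s) by case: n => [|n]; [exact: pi0_pol | exact: (upd n s).1].
have pi_rint n s : rint (edom h) (pi n s).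
  elim: n s => [|n IH] s; first exact: pi0_rint.
  exact: (pmd_update_rint hL subC (upd n s) (pol n s) (IH s)).
apply: (bellman_comparison mdp.1 (pol k.+1) mdp.2.2) => [s a|s a|s];
  [exact: Qfun_bellman | exact: Qfun_bellman |].
apply: dotp_simplexB_approx_ge (pol k.+1 s) (pol k s) (Qhat_err s) _.
exact: (pmd_update_improves hL subC (upd k s) (eta0 k) (pol k s) (pi_rint k s)).
Qed.
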